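(* Let $K$ be a compact subset of $\mathbb R^d$, let $\mu\in\mathcal P(K)$ and let $q\in\mathbb R$. Then for any $\tau\in(\underline D_\mu(q),\overline D_\mu(q))$ there exists a sequence $(r_n)$ of positive numbers tending to $0$ such that $\frac{\log I_\mu(r_n,q)}{(q-1)\log r_n}\to\tau$ when $q\ne1$, and $\frac{I_\mu(r_n,1)}{\log r_n}\to\tau$ when $q=1$.
   Context: $\mathcal P(K)$ is the set of Borel probability measures on $K$; $B(x,r)$ is the open ball. For $q\ne1$: $I_\mu(r,q)=\int_K\mu(B(x,r))^{q-1}d\mu(x)$, $\underline D_\mu(q)=\liminf_{r\to0}\frac{\log I_\mu(r,q)}{(q-1)\log r}$, $\overline D_\mu(q)$ the $\limsup$. For $q=1$: $I_\mu(r,1)=\int_K\log\mu(B(x,r))d\mu(x)$, $\underline D_\mu(1)=\liminf_{r\to0}\frac{I_\mu(r,1)}{\log r}$, $\overline D_\mu(1)$ the $\limsup$. *)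

From HB Require Import structures.
From mathcomp Require Import all_boot all_order all_algebra.
From mathcomp Require Import all_classical all_reals all_analysis.
Set Implicit Arguments. Unset Strict Implicit. Unset Printing Implicit Defensive.
Import Order.TTheory GRing.Theory Num.Theory.
Import numFieldNormedType.Exports.
Local Open Scope classical_set_scope.
Local Open Scope ring_scope.

Definition Rd (R : realType) (d : nat) := 'rV[R]_d.

Definition BorelRd (R : realType) (d : nat) :=
  g_sigma_algebraType (@open ('rV[R]_d)).

Definition eball (R : realType) (d : nat) (x : BorelRd R d) (r : R)
  : set (BorelRd R d) :=
  [set y | Num.sqrt (\sum_(i < d) (x ord0 i - y ord0 i) ^+ 2) < r].

Definition Iq (R : realType) (d : nat) (K : set (BorelRd R d))
  (mu : probability (BorelRd R d) R) (r q : R) : \bar R :=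
  (\int[mu]_(x in K) ((fine (mu (eball x r))) `^ (q - 1))%:E)%E.

Definition I1 (R : realType) (d : nat) (K : set (BorelRd R d))
  (mu : probability (BorelRd R d) R) (r : R) : \bar R :=
  (\int[mu]_(x in K) (ln (fine (mu (eball x r))))%:E)%E.

Definition Dratio (R : realType) (d : nat) (K : set (BorelRd R d))
  (mu : probability (BorelRd R d) R) (q r : R) : R :=
  if q == 1 then fine (I1 K mu r) / ln r
  else ln (fine (Iq K mu r q)) / ((q - 1) * ln r).

Definition Dlow (R : realType) (d : nat) (K : set (BorelRd R d))
  (mu : probability (BorelRd R d) R) (q : R) : \bar R :=
  limf_einf (fun r : R => (Dratio K mu q r)%:E) (0 : R)^'+.

Definition Dup (R : realType) (d : nat) (K : set (BorelRd R d))
  (mu : probability (BorelRd R d) R) (q : R) : \bar R :=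
  limf_esup (fun r : R => (Dratio K mu q r)%:E) (0 : R)^'+.

From HB Require Import structures.
From mathcomp Require Import all_boot all_order all_algebra.
From mathcomp Require Import all_classical all_reals all_analysis.
Import Order.TTheory GRing.Theory Num.Theory.
Import numFieldNormedType.Exports.
Local Open Scope classical_set_scope.
Local Open Scope ring_scope.
From mathcomp Require Import finmap ring lra.

(* For q <> 1, [Dratio r * ln r = ln I(r,q) / (q - 1)], and for q = 1 it is
   [I(r,1)].  Since [r |-> mu(B(x,r))] is nondecreasing and, K being compact,
   mu-almost every x in K has balls of positive mass, this product is
   nondecreasing in r on (0,1), unless I degenerates near 0, in which case
   [Dratio] vanishes there and [Dlow = Dup = 0].  In the variable s = -ln r,
   the function [s * Dratio (exp (-s))] is thus nondecreasing: Dratio can only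
   jump upwards by [|tau| (s - s') / s'] between s' < s.  Refining a
   logarithmic grid between a point where [Dratio < tau] and a point where
   [Dratio > tau] gives points, arbitrarily close to 0, where Dratio is
   arbitrarily close to tau. *)

Set Implicit Arguments.
Unset Strict Implicit.
Unset Printing Implicit Defensive.

Section euclidean_ball.
Variables (R : realType) (d : nat).
Implicit Types (x y z w : 'rV[R]_d) (r : R).

Definition sqdist x y : R := \sum_(i < d) (x ord0 i - y ord0 i) ^+ 2.

Lemma eball_sqdist (x : BorelRd R d) r y : 0 < r ->
  eball x r y <-> sqdist x y < r ^+ 2.
Proof.
move=> r0; rewrite /eball /= -[X in _ < X](@gtr0_norm _ r)// -sqrtr_sqr.
by rewrite ltr_sqrt ?exprn_gt0.
Qed.

Lemma continuous_sqdist x : continuous (sqdist x).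
Proof.
have -> : sqdist x = \sum_(i < d) (fun y => (x ord0 i - y ord0 i) ^+ 2).
  by apply/funext => y; rewrite /sqdist fct_sumE.
apply: (big_ind (fun f : 'rV[R]_d -> R => continuous f)).
- by move=> y; exact: cst_continuous.
- by move=> f g cf cg y; exact: continuousD (cf y) (cg y).
move=> i _ y.
have cB : {for y, continuous (fun z : 'rV[R]_d => x ord0 i - z ord0 i)}.
  by apply: continuousB; [exact: cst_continuous|exact: coord_continuous].
exact: (continuousM cB cB).
Qed.

Lemma open_eball (x : BorelRd R d) r : open (eball x r : set 'rV[R]_d).
Proof.
have -> : (eball x r : set 'rV[R]_d) = (Num.sqrt \o sqdist x) @^-1` `]-oo, r[.
  by apply/seteqP; split => y; rewrite /eball /= in_itv.
apply: open_comp; last exact: interval_open.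
move=> y _; apply: continuous_comp; first exact: continuous_sqdist.
exact: sqrt_continuous.
Qed.

Lemma measurable_eball (x : BorelRd R d) r : measurable (eball x r).
Proof. by apply: sub_sigma_algebra; exact: open_eball. Qed.

Lemma ball_sub_eball y z w r : 0 < r ->
  ball y (r / (2 * (d%:R + 1))) z -> ball y (r / (2 * (d%:R + 1))) w ->
  eball (z : BorelRd R d) r w.
Proof.
move=> r0; set e := r / (2 * (d%:R + 1)) => -[_ yz] [_ yw].
apply/eball_sqdist => //.
have d1 : 0 < d%:R + 1 :> R by rewrite ltr_wpDl.
have coord_le i : (z ord0 i - w ord0 i) ^+ 2 <= (2 * e) ^+ 2.
  have /ltr_normlP[? ?] := yz ord0 i; have /ltr_normlP[? ?] := yw ord0 i.
  rewrite -real_normK ?num_real// ler_sqr ?nnegrE//.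
    by apply/ler_normlP; split; lra.
  by rewrite mulr_ge0// divr_ge0 ?ltW// mulr_gt0.
apply: (le_lt_trans (ler_sum _ (fun i _ => coord_le i))).
rewrite sumr_const card_ord -[_ *+ d]mulr_natr.
have -> : (2 * e) ^+ 2 * d%:R = r ^+ 2 * (d%:R / (d%:R + 1) ^+ 2).
  by rewrite /e; field; rewrite gt_eqF.
have d0 : 0 <= d%:R :> R by [].
rewrite gtr_pMr ?exprn_gt0// ltr_pdivrMr ?exprn_gt0//; nra.
Qed.

Local Open Scope ereal_scope.

Lemma ae_eball_measure_gt0 (mu : {measure set BorelRd R d -> \bar R})
    (K : set 'rV[R]_d) r : compact K -> (0 < r)%R ->
  \forall x \ae mu, K x -> 0 < mu (eball x r).
Proof.
rewrite compact_cover => cK r0; set e := (r / (2 * (d%:R + 1)))%R.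
have e0 : (0 < e)%R by rewrite divr_gt0// mulr_gt0// ltr_wpDl.
have measurable_ball y : measurable (ball y e : set (BorelRd R d)).
  by apply: sub_sigma_algebra; exact: ball_open.
have [C _ KC] : finite_subset_cover K (fun y : 'rV[R]_d => ball y e) K.
  by apply: cK => [y _|x Kx]; [exact: ball_open|exists x => //; exact: ballxx].
(* Off the null balls of the cover, x lies in a cover ball of positive mass,
   and [ball_sub_eball] puts that ball inside [eball x r]. *)
pose null_ball y : set (BorelRd R d) :=
  if mu (ball y e) == 0 then ball y e else set0.
apply: (@negligibleS _ _ _ mu (\bigcup_(y in [set y | y \in C]) null_ball y)).
  move=> x /= /not_implyP[Kx mu_le0]; have [y Cy xy] := KC x Kx.
  have [mu0|] := eqVneq (mu (ball y e)) 0.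
    by exists y => //; rewrite /null_ball mu0 eqxx.
  rewrite neq_lt ltNge measure_ge0 /= => mu_gt0; case: mu_le0.
  apply: lt_le_trans mu_gt0 _; apply: (le_measure mu).
  - exact: mem_set (measurable_ball y).
  - exact: mem_set (measurable_eball x r).
  - by move=> w yw; exact: ball_sub_eball xy yw.
rewrite bigcup_fset; apply: big_ind => //; first exact: negligible_set0.
  exact: negligibleU.
move=> y _; rewrite /null_ball; case: ifPn => [/eqP mu0|_].
  by exists (ball y e); split => //; exact: measurable_ball.
exact: negligible_set0.
Qed.

End euclidean_ball.

Section ge0_integral_le.
Local Open Scope ereal_scope.
Context d (T : measurableType d) (R : realType) (mu : {measure set T -> \bar R}).
Implicit Types f g : T -> \bar R.

(* Unlike [ge0_le_integral], no measurability is assumed: the integrands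
   [x |-> mu (eball x r) `^ (q - 1)] below are not known to be measurable. *)
Lemma le_ge0_integralT f g : (forall x, 0 <= f x) -> (forall x, f x <= g x) ->
  \int[mu]_x f x <= \int[mu]_x g x.
Proof.
move=> f0 fg; have g0 x : 0 <= g x by exact: le_trans (f0 x) (fg x).
rewrite !ge0_integralTE//; apply: ereal_sup_le => _ [h hf <-].
by exists h => // x; exact: le_trans (hf x) (fg x).
Qed.

Import HBNNSimple.

Lemma ge0_integral_le_setC f (N : set T) : measurable N -> mu N = 0 ->
  (forall x, 0 <= f x) -> \int[mu]_x f x <= \int[mu]_x (f \_ (~` N)) x.
Proof.
move=> mN N0 f0; rewrite [leLHS]ge0_integralTE//.
apply: ge_ereal_sup => _ [h hf <-]; rewrite -integralT_nnsfun.
rewrite (ge0_negligible_integral _ _ _ _ N0)//; last 2 first.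
- by apply/measurable_realfun.measurable_EFinP; exact: measurable_funP.
- by move=> x _; rewrite lee_fin.
rewrite -setTD integral_mkcond; apply: le_ge0_integralT => x; rewrite !patchE.
  by case: ifP => // _; rewrite lee_fin.
by case: ifP => // _; exact: hf.
Qed.

Lemma le_ge0_integral_ae (D : set T) (P : T -> Prop) f g :
  (forall x, D x -> 0 <= f x) -> (forall x, D x -> 0 <= g x) ->
  {ae mu, forall x, P x} -> (forall x, D x -> P x -> f x <= g x) ->
  \int[mu]_(x in D) f x <= \int[mu]_(x in D) g x.
Proof.
move=> f0 g0 [N [mN N0 PN]] fg.
rewrite [leLHS]integral_mkcond [leRHS]integral_mkcond.
have f0D x : 0 <= (f \_ D) x by rewrite patchE; case: ifPn => // /set_mem; exact: f0.
apply: le_trans (ge0_integral_le_setC mN N0 f0D) _.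
apply: le_ge0_integralT => x.
  by rewrite patchE; case: ifPn => // _; exact: f0D.
rewrite [leLHS]patchE; case: ifPn => [/set_mem /= Nx|_]; last first.
  by rewrite patchE; case: ifPn => // /set_mem; exact: g0.
rewrite !patchE; case: ifPn => [/set_mem Dx|_] //.
by apply: fg Dx _; apply: contra_notP Nx => nP; exact: PN.
Qed.

Lemma le0_integralE (D : set T) f : (forall x, D x -> f x <= 0) ->
  \int[mu]_(x in D) f x = - \int[mu]_(x in D) - f x.
Proof.
move=> f0; rewrite integralE (eq_integral (cst 0)); last exact: le0_funeposE.
by rewrite integral0 sub0e (eq_integral (\- f)); last exact: le0_funenegE.
Qed.

End ge0_integral_le.

Section approximation_at_right0.
Variable R : realType.
Implicit Types (g : R -> R) (t : R).

Lemma upcrossing_index (v : nat -> R) t m : v 0%N <= t -> t < v m ->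
  exists2 j, (j < m)%N & v j <= t < v j.+1.
Proof.
elim: m => [|m IH] v0 vm; first by rewrite ltNge v0 in vm.
have [vmt|tvm] := lerP (v m) t; first by exists m => //; rewrite vmt.
by have [j jm vj] := IH v0 tvm; exists j => //; exact: ltnW.
Qed.

Lemma ln_grid_upcrossing g t r1 r2 m : 0 < r1 <= r2 -> (0 < m)%N ->
  g r1 <= t -> t < g r2 ->
  exists r r', [/\ r1 <= r, r <= r' <= r2, g r <= t < g r'
    & ln r' - ln r = (ln r2 - ln r1) / m%:R].
Proof.
move=> /andP[r10 r12] m0 g1 g2.
have r20 := lt_le_trans r10 r12.
pose h := (ln r2 - ln r1) / m%:R.
pose grid j := expR (ln r1 + j%:R * h).
have h0 : 0 <= h by rewrite divr_ge0// subr_ge0 ler_ln ?posrE.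
have grid0 : grid 0%N = r1 by rewrite /grid mul0r addr0 lnK ?posrE.
have gridm : grid m = r2.
  by rewrite /grid /h mulrC divfK ?pnatr_eq0 -?lt0n// addrC subrK lnK ?posrE.
have grid_le j k : (j <= k)%N -> grid j <= grid k.
  by move=> jk; rewrite ler_expR lerD2l ler_wpM2r// ler_nat.
have [j jm gj] : exists2 j, (j < m)%N & g (grid j) <= t < g (grid j.+1).
  by apply: (@upcrossing_index (g \o grid)); rewrite /= ?grid0 ?gridm.
exists (grid j), (grid j.+1); split => //.
- by rewrite -grid0 grid_le.
- by rewrite grid_le //= -gridm grid_le.
- by rewrite /grid !expRK -addn1 natrD -/h; ring.
Qed.

Lemma upcrossing_gap_le (F G t x x' : R) : 0 < x' <= x -> G * x' <= F * x ->
  F <= t -> t < G -> (G - t) * x' <= `|t| * (x - x').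
Proof.
move=> /andP[x'0 x'x] GF Ft tG.
have : F * x <= t * x by rewrite ler_pM2r// (lt_le_trans x'0 x'x).
have := ler_norm t; nra.
Qed.

Lemma approx_of_ln_mul_nondecreasing g t :
  (forall r r', 0 < r -> r <= r' -> r' < 1 -> g r * ln r <= g r' * ln r') ->
  (forall eta, 0 < eta -> exists r, 0 < r < eta /\ g r < t) ->
  (forall eta, 0 < eta -> exists r, 0 < r < eta /\ t < g r) ->
  forall eps eta, 0 < eps -> 0 < eta ->
    exists r, 0 < r < eta /\ `|g r - t| < eps.
Proof.
move=> mono below above eps eta eps0 eta0.
have min_gt0 : 0 < Num.min eta 1 by rewrite lt_min eta0 ltr01.
have [r2 [/andP[r20]]] := above _ min_gt0.
rewrite lt_min => /andP[r2eta r21] tg2.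
have [r1 [/andP[r10 r12] g1t]] := below r2 r20.
have lnr2 : ln r2 < 0 by rewrite ln_lt0// r20.
pose m := (Num.truncn (`|t| * (ln r2 - ln r1) / (eps * - ln r2))).+1.
have r1r2 : 0 < r1 <= r2 by rewrite r10 ltW.
have [r [r' [r1r /andP[rr' r'r2] /andP[grt tgr'] lnr'r]]] :=
  @ln_grid_upcrossing g t r1 r2 m r1r2 isT (ltW g1t) tg2.
have r0 := lt_le_trans r10 r1r; have r'0 := lt_le_trans r0 rr'.
exists r'; split; first by rewrite r'0 (le_lt_trans r'r2 r2eta).
have lnr'2 : ln r' <= ln r2 by rewrite ler_ln ?posrE.
have gap_le : (g r' - t) * - ln r' <= `|t| * ((ln r2 - ln r1) / m%:R).
  rewrite -lnr'r (_ : ln r' - ln r = - ln r - - ln r'); last by ring.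
  apply: (@upcrossing_gap_le (g r)) => //.
  - by rewrite lerN2 ler_ln ?posrE// rr' andbT; lra.
  - by have := mono r r' r0 rr' (le_lt_trans r'r2 r21); rewrite !mulrN; lra.
have small_step : `|t| * ((ln r2 - ln r1) / m%:R) < eps * - ln r2.
  rewrite mulrA ltr_pdivrMr ?ltr0n// -ltr_pdivrMl ?mulr_gt0 ?oppr_gt0//.
  by rewrite mulrC; exact: truncnS_gt.
have lnr'0 : 0 < - ln r' by lra.
have : eps * - ln r2 <= eps * - ln r' by rewrite ler_pM2l// lerN2.
rewrite gtr0_norm ?subr_gt0// -(ltr_pM2r lnr'0); lra.
Qed.

Lemma cvg_seq_of_approx g t :
  (forall eps eta, 0 < eps -> 0 < eta ->
    exists r, 0 < r < eta /\ `|g r - t| < eps) ->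
  exists r : nat -> R, (forall n, 0 < r n) /\ r @ \oo --> 0 /\
    (fun n => g (r n)) @ \oo --> t.
Proof.
move=> approx.
have approx_n n : exists x, 0 < x < n.+1%:R^-1 /\ `|g x - t| < n.+1%:R^-1.
  by apply: approx; rewrite invr_gt0 ltr0n.
have [r rP] := choice approx_n.
have r0 n : 0 < r n by have [/andP[]] := rP n.
exists r; split => //; split; apply/cvgrPdist_lt => e e0; near=> n.
- have [/andP[_ rn_lt] _] := rP n.
  rewrite sub0r normrN gtr0_norm//; apply: lt_trans rn_lt _.
  by near: n; exact: (near_infty_natSinv_lt (PosNum e0)).
- have [_ gr_lt] := rP n; rewrite distrC; apply: lt_trans gr_lt _.
  by near: n; exact: (near_infty_natSinv_lt (PosNum e0)).
Unshelve. all: by end_near.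
Qed.

Lemma limf_esup_gt_at_right0 (f : R -> R) t :
  (t%:E < limf_esup (fun r => (f r)%:E) 0^'+)%E ->
  forall eta, 0 < eta -> exists r, 0 < r < eta /\ t < f r.
Proof.
move=> t_lt eta eta0; apply/not_existsP => no_r; move: t_lt; apply/negP.
rewrite -leNgt limf_esupE; apply: le_trans.
  apply: ereal_inf_lbound; exists [set r | 0 < r < eta] => //.
  near=> r; apply/andP; split; near: r; [exact: nbhs_right_gt|exact: nbhs_right_lt].
apply: ge_ereal_sup => _ [r rP <-]; rewrite lee_fin leNgt.
by apply/negP => tr; apply: (no_r r).
Unshelve. all: by end_near.
Qed.

Lemma limf_einf_lt_at_right0 (f : R -> R) t :
  (limf_einf (fun r => (f r)%:E) 0^'+ < t%:E)%E ->
  forall eta, 0 < eta -> exists r, 0 < r < eta /\ f r < t.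
Proof.
move=> lt_t eta eta0.
have [|r [rP ltr]] := @limf_esup_gt_at_right0 (fun r => - f r) (- t) _ eta eta0.
  have -> : (fun r => (- f r)%:E) = (\- (fun r => (f r)%:E))%E by [].
  by rewrite limf_esupN EFinN lteN2.
by exists r; split => //; rewrite -ltrN2.
Qed.

Lemma dichotomy_at_right0 (P : R -> Prop) :
  (forall r r', 0 < r -> r <= r' -> P r' -> P r) ->
  (exists2 r0, 0 < r0 & forall r, 0 < r < r0 -> P r) \/
  (forall r, 0 < r < 1 -> ~ P r).
Proof.
move=> downP.
have [[r0 /andP[r00 _] Pr0]|noP] := pselect (exists2 r0, 0 < r0 < 1 & P r0).
  by left; exists r0 => // r /andP[r0' rr0]; apply: downP Pr0 => //; exact: ltW.
by right => r r01 Pr; apply: noP; exists r.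
Qed.

End approximation_at_right0.

Lemma lt0_ger_powR (R : realType) (a b p : R) : p < 0 -> 0 < a -> a <= b ->
  b `^ p <= a `^ p.
Proof.
move=> p0 a0 ab; have b0 := lt_le_trans a0 ab.
by rewrite /powR !gt_eqF// ler_expR ler_nM2l// ler_ln ?posrE.
Qed.

Section generalized_dimension.
Variables (R : realType) (d : nat) (K : set (BorelRd R d)).
Variable mu : probability (BorelRd R d) R.
Hypotheses (cK : compact (K : set 'rV[R]_d)) (muK : mu K = 1%E).
Local Notation ballm x r := (fine (mu (eball x r))).

Lemma measurable_compact : measurable K.
Proof.
rewrite -[K]setCK; apply: measurableC; apply: sub_sigma_algebra.
by rewrite openC; apply: compact_closed cK; exact: norm_hausdorff.
Qed.

Lemma mu_eball_le1 x r : (mu (eball x r) <= 1)%E.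
Proof. by apply: probability_le1; exact: measurable_eball. Qed.

Lemma ballm_ge0 x r : 0 <= ballm x r.
Proof. by apply: fine_ge0; exact: measure_ge0. Qed.

Lemma ballm_le1 x r : ballm x r <= 1.
Proof.
rewrite -lee_fin fineK ?mu_eball_le1//.
by rewrite ge0_fin_numE// (le_lt_trans (mu_eball_le1 _ _)) ?ltey.
Qed.

Lemma ballm_gt0 x r : (0 < mu (eball x r))%E -> 0 < ballm x r.
Proof.
by move=> mu0; rewrite fine_gt0// mu0 (le_lt_trans (mu_eball_le1 _ _)) ?ltey.
Qed.

Lemma le_ballm x r r' : r <= r' -> ballm x r <= ballm x r'.
Proof.
move=> rr'; apply: fine_le.
- by rewrite ge0_fin_numE// (le_lt_trans (mu_eball_le1 _ _)) ?ltey.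
- by rewrite ge0_fin_numE// (le_lt_trans (mu_eball_le1 _ _)) ?ltey.
apply: (le_measure mu); try exact: mem_set (measurable_eball _ _).
by move=> y; rewrite /eball /= => /lt_le_trans; apply.
Qed.

Lemma integral_compact_cst1 : (\int[mu]_(x in K) 1 = 1)%E.
Proof. by rewrite integral_cst ?mul1e//; exact: measurable_compact. Qed.

Lemma Iq_ge0 r q : (0 <= Iq K mu r q)%E.
Proof. by apply: integral_ge0 => x _; rewrite lee_fin powR_ge0. Qed.

Lemma Iq_nondecreasing q r r' : 1 < q -> r <= r' -> (Iq K mu r q <= Iq K mu r' q)%E.
Proof.
move=> q1 rr'; have q10 : 0 <= q - 1 by rewrite subr_ge0 ltW.
apply: (le_ge0_integral_ae _ _ (aeW mu (fun _ => I))) => [x _|x _|x _ _];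
  rewrite lee_fin ?powR_ge0//.
exact: (ge0_ler_powR q10 (ballm_ge0 x r) (ballm_ge0 x r') (le_ballm x rr')).
Qed.

Lemma Iq_le1 q r : 1 < q -> (Iq K mu r q <= 1)%E.
Proof.
move=> q1; have q10 : 0 <= q - 1 by rewrite subr_ge0 ltW.
rewrite -integral_compact_cst1.
apply: (le_ge0_integral_ae _ _ (aeW mu (fun _ => I))) => [x _|//|x _ _].
  by rewrite lee_fin powR_ge0.
by have := ge0_ler_powR q10 (ballm_ge0 x r) ler01 (ballm_le1 x r); rewrite /= powR1.
Qed.

Lemma Iq_nonincreasing q r r' : q < 1 -> 0 < r -> r <= r' ->
  (Iq K mu r' q <= Iq K mu r q)%E.
Proof.
move=> q1 r0 rr'; have q10 : q - 1 < 0 by rewrite subr_lt0.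
apply: (le_ge0_integral_ae _ _ (ae_eball_measure_gt0 mu cK r0))
  => [x _|x _|x Kx /(_ Kx)]; rewrite lee_fin ?powR_ge0// => mu_gt0.
exact: lt0_ger_powR q10 (ballm_gt0 mu_gt0) (le_ballm x rr').
Qed.

Lemma Iq_ge1 q r : q < 1 -> 0 < r -> (1 <= Iq K mu r q)%E.
Proof.
move=> q1 r0; have q10 : q - 1 < 0 by rewrite subr_lt0.
rewrite -integral_compact_cst1.
apply: (le_ge0_integral_ae _ _ (ae_eball_measure_gt0 mu cK r0))
  => [//|x _|x Kx /(_ Kx)].
  by rewrite lee_fin powR_ge0.
move=> mu_gt0; have := lt0_ger_powR q10 (ballm_gt0 mu_gt0) (ballm_le1 x r).
by rewrite lee_fin powR1.
Qed.

Lemma I1E r : I1 K mu r = (- \int[mu]_(x in K) (- ln (ballm x r))%:E)%E.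
Proof.
by rewrite /I1 le0_integralE// => x _; rewrite lee_fin ln_le0// ballm_le1.
Qed.

Lemma I1_le0 r : (I1 K mu r <= 0)%E.
Proof.
rewrite I1E oppe_le0; apply: integral_ge0 => x _.
by rewrite lee_fin oppr_ge0 ln_le0// ballm_le1.
Qed.

Lemma I1_nondecreasing r r' : 0 < r -> r <= r' -> (I1 K mu r <= I1 K mu r')%E.
Proof.
move=> r0 rr'; rewrite !I1E leeN2.
apply: (le_ge0_integral_ae _ _ (ae_eball_measure_gt0 mu cK r0))
  => [x _|x _|x Kx /(_ Kx)]; rewrite lee_fin ?oppr_ge0 ?ln_le0 ?ballm_le1//.
move=> /ballm_gt0 m0.
by rewrite lerN2 ler_ln ?posrE ?le_ballm// (lt_le_trans m0 (le_ballm _ rr')).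
Qed.

Lemma Dratio_mul_ln q r : q != 1 -> 0 < r < 1 ->
  Dratio K mu q r * ln r = ln (fine (Iq K mu r q)) / (q - 1).
Proof.
move=> q1 /andP[r0 r1]; have lnr : ln r != 0 by rewrite lt_eqF// ln_lt0// r0.
by rewrite /Dratio (negbTE q1); field; rewrite lnr subr_eq0 q1.
Qed.

Lemma Dratio1_mul_ln r : 0 < r < 1 -> Dratio K mu 1 r * ln r = fine (I1 K mu r).
Proof.
by move=> /andP[r0 r1]; rewrite /Dratio eqxx divfK// lt_eqF// ln_lt0// r0.
Qed.

(* The degenerate alternative: where [I(r,q)] is 0 or infinite, the junk
   values [fine (+oo) = 0] and [ln 0 = 0] make [Dratio] vanish. *)
Definition Dratio_vanishing q :=
  exists2 r0, 0 < r0 & forall r, 0 < r < r0 -> Dratio K mu q r = 0.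

Definition Dratio_ln_nondecreasing q :=
  forall r r', 0 < r -> r <= r' -> r' < 1 ->
    Dratio K mu q r * ln r <= Dratio K mu q r' * ln r'.

Lemma Dratio_dichotomy_gt1 q : 1 < q ->
  Dratio_vanishing q \/ Dratio_ln_nondecreasing q.
Proof.
move=> q1; pose J r := fine (Iq K mu r q).
have Ifin r : Iq K mu r q \is a fin_num.
  by rewrite ge0_fin_numE ?Iq_ge0// (le_lt_trans (Iq_le1 r q1)) ?ltey.
have J_ge0 r : 0 <= J r by rewrite fine_ge0 ?Iq_ge0.
have J_le r r' : r <= r' -> J r <= J r'.
  by move=> rr'; exact: fine_le (Ifin r) (Ifin r') (Iq_nondecreasing q1 rr').
have [|[r0 r00 J0]|J_neq0] := dichotomy_at_right0 (P := fun r => J r = 0).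
- by move=> r r' _ rr' Jr'; apply/eqP; rewrite eq_le J_ge0 andbT -Jr' J_le.
- left; exists r0 => // r /J0 Jr.
  by rewrite /Dratio gt_eqF// -/(J r) Jr ln0// mul0r.
right => r r' r0 rr' r'1.
have r01 : 0 < r < 1 by rewrite r0 (le_lt_trans rr' r'1).
have r'01 : 0 < r' < 1 by rewrite (lt_le_trans r0 rr') r'1.
have J_gt0 s : 0 < s < 1 -> 0 < J s.
  by move=> s01; rewrite lt_def J_ge0 andbT; apply/eqP; exact: J_neq0.
have q_neq1 : q != 1 by rewrite gt_eqF.
rewrite (Dratio_mul_ln q_neq1 r01) (Dratio_mul_ln q_neq1 r'01).
rewrite ler_pM2r; last by rewrite invr_gt0 subr_gt0.
by rewrite ler_ln ?posrE ?J_gt0// J_le.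
Qed.

Lemma Dratio_dichotomy_lt1 q : q < 1 ->
  Dratio_vanishing q \/ Dratio_ln_nondecreasing q.
Proof.
move=> q1.
have [|[r0 r00 I0]|I_fin] :=
  dichotomy_at_right0 (P := fun r => Iq K mu r q = +oo%E).
- by move=> r r' r0 rr' Ir'; apply/eqP; rewrite eq_le leey -Ir' Iq_nonincreasing.
- left; exists r0 => // r /I0 Ir.
  by rewrite /Dratio lt_eqF// Ir ln0// mul0r.
right => r r' r0 rr' r'1.
have r01 : 0 < r < 1 by rewrite r0 (le_lt_trans rr' r'1).
have r'01 : 0 < r' < 1 by rewrite (lt_le_trans r0 rr') r'1.
have Ifin s : 0 < s < 1 -> Iq K mu s q \is a fin_num.
  move=> s01; have /andP[s0 _] := s01.
  rewrite ge0_fin_numE ?(le_trans _ (Iq_ge1 q1 s0))// lt_neqAle leey andbT.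
  by apply/eqP; exact: I_fin.
have J_pos s : 0 < s < 1 -> fine (Iq K mu s q) \in Num.pos.
  move=> s01; have /andP[s0 _] := s01; rewrite posrE (lt_le_trans ltr01)//.
  by rewrite -lee_fin fineK ?Ifin// Iq_ge1.
have q_neq1 : q != 1 by rewrite lt_eqF.
rewrite (Dratio_mul_ln q_neq1 r01) (Dratio_mul_ln q_neq1 r'01).
rewrite ler_nM2r; last by rewrite invr_lt0 subr_lt0.
rewrite (ler_ln (J_pos _ r'01) (J_pos _ r01)).
exact: fine_le (Ifin _ r'01) (Ifin _ r01) (Iq_nonincreasing q1 r0 rr').
Qed.

Lemma Dratio_dichotomy_eq1 : Dratio_vanishing 1 \/ Dratio_ln_nondecreasing 1.
Proof.
have [|[r0 r00 I0]|I_fin] :=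
  dichotomy_at_right0 (P := fun r => I1 K mu r = -oo%E).
- by move=> r r' r0 rr' Ir'; apply/eqP; rewrite eq_le leNye -Ir' I1_nondecreasing.
- left; exists r0 => // r /I0 Ir.
  by rewrite /Dratio eqxx Ir mul0r.
right => r r' r0 rr' r'1.
have r01 : 0 < r < 1 by rewrite r0 (le_lt_trans rr' r'1).
have r'01 : 0 < r' < 1 by rewrite (lt_le_trans r0 rr') r'1.
have Ifin s : 0 < s < 1 -> I1 K mu s \is a fin_num.
  move=> s01; rewrite fin_numE (lt_eqF (le_lt_trans (I1_le0 s) (ltry 0))) andbT.
  by apply/eqP/I_fin.
rewrite (Dratio1_mul_ln r01) (Dratio1_mul_ln r'01).
exact: fine_le (Ifin _ r01) (Ifin _ r'01) (I1_nondecreasing r0 rr').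
Qed.

Lemma Dratio_dichotomy q : Dratio_vanishing q \/ Dratio_ln_nondecreasing q.
Proof.
have [q1|q1|->] := ltgtP q 1.
- exact: Dratio_dichotomy_lt1.
- exact: Dratio_dichotomy_gt1.
- exact: Dratio_dichotomy_eq1.
Qed.

End generalized_dimension.

Theorem proposition7p3 (R : realType) (d : nat) (K : set (BorelRd R d))
  (mu : probability (BorelRd R d) R) (q tau : R) :
  compact (K : set 'rV[R]_d) -> mu K = 1%E ->
  (Dlow K mu q < tau%:E < Dup K mu q)%E ->
  exists r : nat -> R,
    (forall n, 0 < r n) /\ r @ \oo --> 0 /\
    (fun n => Dratio K mu q (r n)) @ \oo --> tau.
Proof.
move=> cK muK /andP[Dlow_tau tau_Dup].
have below := limf_einf_lt_at_right0 Dlow_tau.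
have above := limf_esup_gt_at_right0 tau_Dup.
have [[r0 r00 D0]|Dmono] := Dratio_dichotomy cK muK q.
  have [r [r_r0 Dr]] := below r0 r00; have [r' [r'_r0 Dr']] := above r0 r00.
  by move: (lt_trans Dr Dr'); rewrite (D0 _ r_r0) (D0 _ r'_r0) ltxx.
apply: cvg_seq_of_approx.
exact: approx_of_ln_mul_nondecreasing Dmono below above.
Qed.
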